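(* Let $p(a,b\mid x_0,x_1,y,y')$ be a non-signalling racbox. Then for every choice of inputs $x_0,x_1,y,y'\in\{0,1\}$, with probability one the outputs satisfy $$b = x_y\oplus a\oplus y' .$$ Equivalently, whenever $a\neq y'$ the box outputs $b = x_y\oplus 1$ with certainty (it acts as an ''anti-RAC'').
   Context: A box is a family of conditional probability distributions $p(a,b\mid x_0,x_1,y,y')$ with $a,b,x_0,x_1,y,y'\in\{0,1\}$. Alice holds inputs $x_0,x_1$ and output $a$; Bob holds inputs $y,y'$ and output $b$. A racbox is a box with two properties. First, it is non-signalling from Bob to Alice: $p(a\mid x_0,x_1,y,y')=\sum_b p(a,b\mid x_0,x_1,y,y')$ does not depend on $(y,y')$. Second, whenever $a=y'$ one has $b=x_y$, i.e. $p(a,b\mid x_0,x_1,y,y')=0$ whenever $a=y'$ and $b\neq x_y$. A racbox is non-signalling if, in addition, Bob's marginal $p(b\mid x_0,x_1,y,y')=\sum_a p(a,b\mid x_0,x_1,y,y')$ does not depend on $(x_0,x_1)$. *)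

From Stdlib Require Import Reals Bool.
Open Scope R_scope.

(* A box: p a b x0 x1 y y' = p(a,b | x0,x1,y,y'), all variables in {0,1} = bool. *)
Definition box := bool -> bool -> bool -> bool -> bool -> bool -> R.

Definition is_box (p : box) : Prop :=
  (forall a b x0 x1 y y', 0 <= p a b x0 x1 y y') /\
  (forall x0 x1 y y',
     p false false x0 x1 y y' + p false true x0 x1 y y'
     + p true false x0 x1 y y' + p true true x0 x1 y y' = 1).

Definition xsel (x0 x1 y : bool) : bool := if y then x1 else x0.

Definition margA (p : box) a x0 x1 y y' : R :=
  p a false x0 x1 y y' + p a true x0 x1 y y'.
Definition margB (p : box) b x0 x1 y y' : R :=
  p false b x0 x1 y y' + p true b x0 x1 y y'.

Definition racbox (p : box) : Prop :=
  is_box p /\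
  (forall a x0 x1 y y' z z', margA p a x0 x1 y y' = margA p a x0 x1 z z') /\
  (forall a b x0 x1 y y', a = y' -> b <> xsel x0 x1 y -> p a b x0 x1 y y' = 0).

Definition ns_racbox (p : box) : Prop :=
  racbox p /\
  (forall b x0 x1 w0 w1 y y', margB p b x0 x1 y y' = margB p b w0 w1 y y').

From Stdlib Require Import Reals Bool Lra.
Open Scope R_scope.

(* Fix Bob's input y and write x = x_y.  Compare Alice's input
   (x0,x1) with the complemented input (~x0,~x1), whose selected bit is ~x.
   - For Alice's input (x0,x1) and any y', the racbox condition gives
     P(b = x) = P(a = y') + P(a <> y', b = x).
   - For Alice's input (~x0,~x1) the racbox condition forbids (a = y', b = x),
     so P(b = x) <= P(a <> y').
   Bob's marginal does not depend on Alice's input, so the first quantity is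
   bounded by the second.  Adding the two bounds for y' = 0 and y' = 1 and
   using that Alice's marginal does not depend on y', both sides reduce to 1,
   whence P(a <> y', b = x) = 0 for both values of y' ("anti-RAC" behaviour).
   Together with the racbox condition for a = y' this gives b = x xor a xor y'
   with probability one. *)

Section NonSignallingRacbox.

Variable p : box.
Hypothesis Hp : ns_racbox p.

Lemma p_nonneg a b x0 x1 y y' : 0 <= p a b x0 x1 y y'.
Proof. destruct Hp as [[[Hn _] _] _]. apply Hn. Qed.

Lemma margA_total x0 x1 y y' :
  margA p false x0 x1 y y' + margA p true x0 x1 y y' = 1.
Proof.
  destruct Hp as [[[_ Hs] _] _].
  unfold margA. rewrite <- (Hs x0 x1 y y'). ring.
Qed.

Lemma margA_indep a x0 x1 y y' z' :
  margA p a x0 x1 y y' = margA p a x0 x1 y z'.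
Proof. destruct Hp as [[_ [HA _]] _]. apply HA. Qed.

Lemma margB_indep b x0 x1 w0 w1 y y' :
  margB p b x0 x1 y y' = margB p b w0 w1 y y'.
Proof. destruct Hp as [_ HB]. apply HB. Qed.

Lemma rac_wrong_zero x0 x1 y y' :
  p y' (negb (xsel x0 x1 y)) x0 x1 y y' = 0.
Proof.
  destruct Hp as [[_ [_ HZ]] _].
  apply HZ; [reflexivity | destruct (xsel x0 x1 y); discriminate].
Qed.

Lemma margB_correct x0 x1 y y' :
  margB p (xsel x0 x1 y) x0 x1 y y'
  = margA p y' x0 x1 y y' + p (negb y') (xsel x0 x1 y) x0 x1 y y'.
Proof.
  pose proof (rac_wrong_zero x0 x1 y y') as Hz.
  unfold margB, margA.
  destruct y', (xsel x0 x1 y); simpl in *; lra.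
Qed.

Lemma margB_wrong_le x0 x1 y y' :
  margB p (negb (xsel x0 x1 y)) x0 x1 y y' <= margA p (negb y') x0 x1 y y'.
Proof.
  pose proof (rac_wrong_zero x0 x1 y y') as Hz.
  pose proof (p_nonneg (negb y') (xsel x0 x1 y) x0 x1 y y').
  unfold margB, margA.
  destruct y', (xsel x0 x1 y); simpl in *; lra.
Qed.

Lemma xsel_negb x0 x1 y : xsel (negb x0) (negb x1) y = negb (xsel x0 x1 y).
Proof. destruct y; reflexivity. Qed.

Lemma compare_complement x0 x1 y y' :
  margA p y' x0 x1 y y' + p (negb y') (xsel x0 x1 y) x0 x1 y y'
  <= margA p (negb y') (negb x0) (negb x1) y y'.
Proof.
  rewrite <- margB_correct, (margB_indep _ x0 x1 (negb x0) (negb x1)).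
  rewrite <- (negb_involutive (xsel x0 x1 y)), <- xsel_negb.
  apply margB_wrong_le.
Qed.

Lemma anti_rac x0 x1 y y' : p (negb y') (xsel x0 x1 y) x0 x1 y y' = 0.
Proof.
  pose proof (compare_complement x0 x1 y false) as H0.
  pose proof (compare_complement x0 x1 y true) as H1.
  pose proof (margA_total x0 x1 y false).
  pose proof (margA_total (negb x0) (negb x1) y false).
  pose proof (margA_indep true x0 x1 y true false).
  pose proof (margA_indep false (negb x0) (negb x1) y true false).
  pose proof (p_nonneg true (xsel x0 x1 y) x0 x1 y false).
  pose proof (p_nonneg false (xsel x0 x1 y) x0 x1 y true).
  simpl in H0, H1.
  destruct y'; simpl; lra.
Qed.

End NonSignallingRacbox.

Theorem lemma1 (p : box) (Hp : ns_racbox p) :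
  forall x0 x1 y y' a b,
    b <> xorb (xorb (xsel x0 x1 y) a) y' -> p a b x0 x1 y y' = 0.
Proof.
  intros x0 x1 y y' a b Hb.
  destruct (bool_dec a y') as [-> | Ha].
  -
    replace b with (negb (xsel x0 x1 y))
      by (destruct b, (xsel x0 x1 y), y'; simpl in *; congruence).
    apply (rac_wrong_zero p Hp).
  -
    assert (Ea : a = negb y') by (destruct a, y'; simpl; congruence).
    subst a.
    replace b with (xsel x0 x1 y)
      by (destruct b, (xsel x0 x1 y), y'; simpl in *; congruence).
    apply (anti_rac p Hp).
Qed.
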